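(* Consider a one-site PTM cascade with $n\ge1$ layers and positive total amounts. Let $r(s)=f_0(s)+f_1^Y(s)\in\mathbb{R}(s)$ and write $r=r_1/r_2$ in reduced form with $r_1,r_2\in\mathbb{R}[s]$. Then at every steady state, the value $s=S_n^1$ is a root of the nonzero univariate polynomial $P(s)=r_2(s)\,\overline{E}-r_1(s)$. Moreover, at every steady state all other concentrations are rational functions of $S_n^1$: $S_i^1=f_i(S_n^1)$ for $i=0,\dots,n-1$ (with $E=S_0^1$), $Y_i^0=f_i^Y(S_n^1)$, and $F_i=\frac{\overline{F}_i}{1+\delta_iS_i^1}$, $Y_i^1=\frac{\delta_i\overline{F}_iS_i^1}{1+\delta_iS_i^1}$, $S_i^0=\frac{\lambda_i\overline{F}_iS_i^1}{(1+\delta_iS_i^1)S_{i-1}^1}$, where all denominators occurring (in the recursive definition of $f_i,f_i^Y$ evaluated at $S_n^1$ and in these formulas) are nonzero.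
   Context: A one-site PTM cascade with $n$ layers has chemical species $E=S_0^1$ and, for $i=1,\dots,n$, $S_i^0,S_i^1,F_i,Y_i^0,Y_i^1$, with reactions $S_{i-1}^1+S_i^0 \rightleftharpoons Y_i^0 \to S_{i-1}^1+S_i^1$ (rate constants $a_i^0,b_i^0,c_i^0$) and $F_i+S_i^1\rightleftharpoons Y_i^1\to F_i+S_i^0$ (rate constants $a_i^1,b_i^1,c_i^1$), all positive, mass-action kinetics. Put $\delta_i=a_i^1/(b_i^1+c_i^1)$, $\gamma_i=(c_i^1/c_i^0)\delta_i$, $\lambda_i=\frac{b_i^0+c_i^0}{a_i^0}\gamma_i$. Given total amounts $\overline{E},\overline{F}_i,\overline{S}_i$, a steady state is a real solution of: $Y_i^0=\gamma_iF_iS_i^1$, $Y_i^1=\delta_iF_iS_i^1$, $\lambda_iF_iS_i^1=S_i^0S_{i-1}^1$, $\overline{F}_i=F_i+Y_i^1$, $\overline{S}_i=S_i^0+S_i^1+Y_i^0+Y_i^1+Y_{i+1}^0$ ($i=1,\dots,n$, $Y_{n+1}^0:=0$), $\overline{E}=E+Y_1^0$. Define for $i=1,\dots,n$ the polynomial $d_i(x,y)=(\overline{S}_i-y)-x-\overline{F}_i(\delta_i+\gamma_i)x+\delta_i(\overline{S}_i-y)x-\delta_ix^2$ and $g_i^Y(x)=\frac{\gamma_i\overline{F}_ix}{1+\delta_ix}$. Define rational functions of one variable $s$ recursively: $f_n(s)=s$, $f_{n+1}^Y(s)=0$, and for $i=n,n-1,\dots,1$: $f_i^Y(s)=g_i^Y(f_i(s))$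 and $f_{i-1}(s)=\frac{\lambda_i\overline{F}_if_i(s)}{d_i(f_i(s),f_{i+1}^Y(s))}$. *)

From HB Require Import structures.
From mathcomp Require Import all_boot all_order all_algebra.
Set Implicit Arguments. Unset Strict Implicit. Unset Printing Implicit Defensive.
Import Order.TTheory GRing.Theory Num.Theory.
Local Open Scope ring_scope.

(* One-site PTM cascade with n layers.  Layer-indexed data are functions
   nat -> R; only the values at i = 1..n matter. *)
Section Cascade.
Variables (R : realFieldType) (n : nat).
Variables (a0 b0 c0 a1 b1 c1 : nat -> R) (Fbar Sbar : nat -> R).

Definition delta (i : nat) : R := a1 i / (b1 i + c1 i).
Definition gamma (i : nat) : R := (c1 i / c0 i) * delta i.
Definition lambda (i : nat) : R := (b0 i + c0 i) / a0 i * gamma i.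

(* Generic evaluation of the recursion in any field K into which the
   real constants are mapped by k (K = R with k = id : pointwise values;
   K = R(s) with k = constant rational functions : rational functions). *)
Section Recursion.
Variables (K : fieldType) (k : R -> K).

Definition dpoly (i : nat) (x y : K) : K :=
  (k (Sbar i) - y) - x - k (Fbar i) * (k (delta i) + k (gamma i)) * x
  + k (delta i) * (k (Sbar i) - y) * x - k (delta i) * x ^+ 2.

Definition gY (i : nat) (x : K) : K :=
  k (gamma i) * k (Fbar i) * x / (1 + k (delta i) * x).

(* cstate s m = (f_{n-m}(s), f^Y_{n-m+1}(s)) for m <= n *)
Fixpoint cstate (s : K) (m : nat) : K * K :=
  match m with
  | 0 => (s, 0)
  | m'.+1 =>
      let i := (n - m')%N in
      let p := cstate s m' in
      (k (lambda i) * k (Fbar i) * p.1 / dpoly i p.1 p.2, gY i p.1)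
  end.

Definition fcas (i : nat) (s : K) : K := (cstate s (n - i)).1.
Definition fYcas (i : nat) (s : K) : K :=
  if (n < i)%N then 0 else (cstate s (n - i).+1).2.

End Recursion.

Definition ratfun_r : {fraction {poly R}} :=
  let k := fun c : R => FracField.tofrac (c%:P) in
  let s := FracField.tofrac ('X : {poly R}) in
  fcas k 0 s + fYcas k 1 s.

Definition fval (i : nat) (x : R) : R := fcas id i x.
Definition fYval (i : nat) (x : R) : R := fYcas id i x.

(* Steady states: real solutions of the steady-state system;
   E = S1 0, and Y_{n+1}^0 := 0. *)
Definition steady_state (Ebar : R) (S0 S1 F Y0 Y1 : nat -> R) : Prop :=
  (forall i, (1 <= i <= n)%N ->
     [/\ Y0 i = gamma i * F i * S1 i,
         Y1 i = delta i * F i * S1 i,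
         lambda i * F i * S1 i = S0 i * S1 i.-1,
         Fbar i = F i + Y1 i &
         Sbar i = S0 i + S1 i + Y0 i + Y1 i + (if i == n then 0 else Y0 i.+1)])
  /\ Ebar = S1 0%N + Y0 1%N.

End Cascade.

From HB Require Import structures.
From mathcomp Require Import all_boot all_order all_algebra.
From mathcomp Require Import ring zify.
Set Implicit Arguments. Unset Strict Implicit. Unset Printing Implicit Defensive.
Import Order.TTheory GRing.Theory Num.Theory.
Local Open Scope ring_scope.

(* A steady state is solved layer by layer, downwards from layer n: once
   S_i^1 <> 0 is known, the equations of layer i express F_i, Y_i^0, Y_i^1,
   S_i^0 and S_(i-1)^1 through S_i^1 and Y_(i+1)^0, which is exactly the
   recursion defining f_(i-1) and f_i^Y; the conservation law for E then reads
   f_0(x) + f_1^Y(x) = Ebar at x = S_n^1.  That S_n^1 <> 0 follows from the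
   same downward solution: S_n^1 = 0 would force S_0^1 = Y_1^0 = 0, against
   Ebar > 0.
   To pass from this identity between values to the fraction r1/r2, every
   rational function produced by the recursion is written p/q with q(x) <> 0,
   and on such quotients evaluation respects the field operations.  Finally
   P <> 0 because r vanishes at s = 0, where all denominators reduce to
   Sbar_i > 0, while Ebar > 0. *)

Lemma leq_down_ind (n : nat) (P : nat -> Prop) :
  P n -> (forall i, (1 <= i <= n)%N -> P i -> P i.-1) ->
  forall i, (i <= n)%N -> P i.
Proof.
move=> Pn step i lein; rewrite -(subKn lein).
elim: (n - i)%N (leq_subr i n) => [|m IHm] lemn; first by rewrite subn0.
by rewrite subnS; apply: step (IHm (ltnW lemn)); lia.
Qed.

Section Recursion.
Variables (R : realFieldType) (n : nat) (a0 b0 c0 a1 b1 c1 Fbar Sbar : nat -> R).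
Variables (K : fieldType) (k : R -> K).
Local Notation f := (fcas n a0 b0 c0 a1 b1 c1 Fbar Sbar k).
Local Notation fY := (fYcas n a0 b0 c0 a1 b1 c1 Fbar Sbar k).

Lemma fcas_top s : f n s = s.
Proof. by rewrite /fcas subnn. Qed.

Lemma fYcas_top s : fY n.+1 s = 0.
Proof. by rewrite /fYcas ltnSn. Qed.

Lemma fYcasE i s : (1 <= i <= n)%N -> fY i s = gY c0 a1 b1 c1 Fbar k i (f i s).
Proof. by case/andP=> i_gt0 le_in; rewrite /fYcas /fcas ltnNge le_in /= subKn. Qed.

Lemma fcas_pred i s : (1 <= i <= n)%N ->
  f i.-1 s = k (lambda a0 b0 c0 a1 b1 c1 i) * k (Fbar i) * f i s
             / dpoly c0 a1 b1 c1 Fbar Sbar k i (f i s) (fY i.+1 s).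
Proof.
case/andP=> i_gt0 le_in; rewrite /fcas.
have -> : (n - i.-1 = (n - i).+1)%N by lia.
rewrite /= subKn //; congr (_ / dpoly _ _ _ _ _ _ _ i _ _).
case: (ltngtP i n) le_in => // [lt_in|->] _; last by rewrite subnn fYcas_top.
by rewrite /fYcas ltnNge lt_in /=; have -> : (n - i = (n - i.+1).+1)%N by lia.
Qed.

End Recursion.

Section RegularValue.
Variable R : fieldType.
Local Notation "p %:F" := (@FracField.tofrac {poly R} p).

Definition regular_at (a : R) (z : {fraction {poly R}}) (v : R) :=
  exists p q : {poly R}, [/\ q.[a] != 0, z = p%:F / q%:F & p.[a] = v * q.[a]].

Lemma tofrac_neq0 a (q : {poly R}) : q.[a] != 0 -> q%:F != 0.
Proof. by rewrite tofrac_eq0; apply: contra_neq => ->; rewrite horner0. Qed.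

Lemma regular_atC a c : regular_at a (c%:P)%:F c.
Proof.
by exists c%:P, 1; rewrite tofrac1 divr1 !hornerE; split; rewrite ?mulr1 ?oner_eq0.
Qed.

Lemma regular_at0 a : regular_at a 0 0.
Proof. by have := regular_atC a 0; rewrite tofrac0. Qed.

Lemma regular_at1 a : regular_at a 1 1.
Proof. by have := regular_atC a 1; rewrite tofrac1. Qed.

Lemma regular_atX a : regular_at a 'X%:F a.
Proof. by exists 'X, 1; rewrite tofrac1 divr1 !hornerE; split; rewrite ?mulr1 ?oner_eq0. Qed.

Lemma regular_atD a z w v u :
  regular_at a z v -> regular_at a w u -> regular_at a (z + w) (v + u).
Proof.
move=> [p1 [q1 [q1a -> e1]]] [p2 [q2 [q2a -> e2]]].
exists (p1 * q2 + p2 * q1), (q1 * q2); split.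
- by rewrite hornerM mulf_neq0.
- rewrite tofracD !tofracM.
  by apply: addf_div; [exact: tofrac_neq0 q1a | exact: tofrac_neq0 q2a].
- by rewrite hornerD !hornerM e1 e2; ring.
Qed.

Lemma regular_atN a z v : regular_at a z v -> regular_at a (- z) (- v).
Proof.
move=> [p [q [qa -> e]]]; exists (- p), q.
by rewrite tofracN mulNr hornerN e mulNr.
Qed.

Lemma regular_atM a z w v u :
  regular_at a z v -> regular_at a w u -> regular_at a (z * w) (v * u).
Proof.
move=> [p1 [q1 [q1a -> e1]]] [p2 [q2 [q2a -> e2]]].
exists (p1 * p2), (q1 * q2); split.
- by rewrite hornerM mulf_neq0.
- by rewrite mulf_div !tofracM.
- by rewrite !hornerM e1 e2; ring.
Qed.

Lemma regular_atV a z v : v != 0 -> regular_at a z v -> regular_at a z^-1 v^-1.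
Proof.
move=> v_neq0 [p [q [qa -> e]]]; exists q, p; split.
- by rewrite e mulf_neq0.
- by rewrite invf_div.
- by rewrite e mulKf.
Qed.

Lemma regular_at_frac a (r1 r2 : {poly R}) v :
  r2 != 0 -> regular_at a (r1%:F / r2%:F) v -> r1.[a] = v * r2.[a].
Proof.
move=> r2_neq0 [p [q [qa E e]]].
have r2F : r2%:F != 0 by rewrite tofrac_eq0.
have : (r1 * q)%:F == (p * r2)%:F.
  by rewrite !tofracM -(eqr_div _ _ r2F (tofrac_neq0 qa)) E eqxx.
rewrite tofrac_eq => /eqP/(congr1 (horner^~ a)); rewrite !hornerM e mulrAC.
exact: mulIf.
Qed.

Lemma regular_at_unique a z v w :
  regular_at a z v -> regular_at a z w -> v = w.
Proof.
move=> zv [p [q [qa Ez e]]]; rewrite Ez in zv.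
have q_neq0 : q != 0 by apply: contra_neq qa => ->; rewrite horner0.
by apply: (mulIf qa); rewrite -e (regular_at_frac q_neq0 zv).
Qed.

End RegularValue.

Section RationalCascade.
Variables (R : realFieldType) (n : nat) (a0 b0 c0 a1 b1 c1 Fbar Sbar : nat -> R).
Local Notation "p %:F" := (@FracField.tofrac {poly R} p).
Local Notation kF := (fun c : R => (c%:P)%:F).
Local Notation f := (fcas n a0 b0 c0 a1 b1 c1 Fbar Sbar).
Local Notation fY := (fYcas n a0 b0 c0 a1 b1 c1 Fbar Sbar).
Local Notation fv := (fval n a0 b0 c0 a1 b1 c1 Fbar Sbar).
Local Notation fYv := (fYval n a0 b0 c0 a1 b1 c1 Fbar Sbar).
Local Notation dp := (dpoly c0 a1 b1 c1 Fbar Sbar).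
Local Notation gy := (gY c0 a1 b1 c1 Fbar).
Local Notation dl := (delta a1 b1 c1).

Lemma regular_at_dpoly a i z w v u : regular_at a z v -> regular_at a w u ->
  regular_at a (dp kF i z w) (dp id i v u).
Proof.
move=> zv wu; rewrite /dpoly !expr2.
by repeat first [apply: regular_atD | apply: regular_atN | apply: regular_atM
                | apply: regular_atC | eassumption].
Qed.

Lemma regular_at_gY a i z v : regular_at a z v -> 1 + dl i * v != 0 ->
  regular_at a (gy kF i z) (gy id i v).
Proof.
move=> zv den_neq0; rewrite /gY.
apply: regular_atM; last apply: regular_atV den_neq0 _;
  by repeat first [apply: regular_atD | apply: regular_atM | apply: regular_atC
                  | apply: regular_at1 | eassumption].
Qed.

Definition cascade_nondegenerate (a : R) := forall i, (1 <= i <= n)%N ->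
  1 + dl i * fv i a != 0 /\ dp id i (fv i a) (fYv i.+1 a) != 0.

Lemma regular_at_cascade a : cascade_nondegenerate a ->
  forall i, (i <= n)%N ->
  regular_at a (f kF i 'X%:F) (fv i a) /\ regular_at a (fY kF i.+1 'X%:F) (fYv i.+1 a).
Proof.
move=> nondeg; apply: leq_down_ind.
  by rewrite /fval /fYval !fcas_top !fYcas_top; split; [apply: regular_atX | apply: regular_at0].
move=> i i_range [fi fYi]; have [gY_den_neq0 d_neq0] := nondeg i i_range.
rewrite prednK; last by case/andP: i_range.
rewrite /fval /fYval in fi fYi gY_den_neq0 d_neq0 *.
rewrite !fcas_pred // ![fY _ i _]fYcasE //; split; last exact: regular_at_gY.
apply: regular_atM; last by apply: regular_atV d_neq0 _; apply: regular_at_dpoly.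
by apply: regular_atM fi; apply: regular_atM; apply: regular_atC.
Qed.

Lemma regular_at_ratfun_r a : cascade_nondegenerate a ->
  regular_at a (ratfun_r n a0 b0 c0 a1 b1 c1 Fbar Sbar) (fv 0 a + fYv 1 a).
Proof.
move=> nondeg; have [f0 fY1] := regular_at_cascade nondeg (leq0n n).
exact: regular_atD f0 fY1.
Qed.

Lemma cascade_at0 : forall i, (i <= n)%N -> fv i 0 = 0 /\ fYv i.+1 0 = 0.
Proof.
apply: leq_down_ind; first by rewrite /fval /fYval fcas_top fYcas_top.
move=> j j_range [fj fYj]; rewrite prednK; last by case/andP: j_range.
rewrite /fval /fYval in fj fYj *.
by rewrite fcas_pred // [fY _ j _]fYcasE // fj /gY !mulr0 !mul0r.
Qed.

Lemma cascade_nondegenerate0 : (forall i, (1 <= i <= n)%N -> 0 < Sbar i) ->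
  cascade_nondegenerate 0.
Proof.
move=> Sbar_gt0 i i_range; have /andP[_ le_in] := i_range.
have [fi fYi] := cascade_at0 le_in.
rewrite fi fYi mulr0 addr0 oner_eq0 /dpoly expr2 !mulr0 !subr0 addr0.
by rewrite gt_eqF ?Sbar_gt0.
Qed.

Lemma ratfun_r_regular_at0 : (forall i, (1 <= i <= n)%N -> 0 < Sbar i) ->
  regular_at 0 (ratfun_r n a0 b0 c0 a1 b1 c1 Fbar Sbar) 0.
Proof.
move=> /cascade_nondegenerate0/regular_at_ratfun_r.
by have [-> ->] := cascade_at0 (leq0n n); rewrite addr0.
Qed.

End RationalCascade.

Lemma layer_solution (R : fieldType) (Sb Fb d g l v u S0 w F Y0 Y1 : R) :
  Fb != 0 -> l != 0 -> v != 0 ->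
  Y0 = g * F * v -> Y1 = d * F * v -> l * F * v = S0 * w -> Fb = F + Y1 ->
  Sb = S0 + v + Y0 + Y1 + u ->
  let D := (Sb - u) - v - Fb * (d + g) * v + d * (Sb - u) * v - d * v ^+ 2 in
  [/\ 1 + d * v != 0, D != 0, w != 0, w = l * Fb * v / D &
      [/\ Y0 = g * Fb * v / (1 + d * v), F = Fb / (1 + d * v),
          Y1 = d * Fb * v / (1 + d * v) & S0 = l * Fb * v / ((1 + d * v) * w)]].
Proof.
move=> Fb_neq0 l_neq0 v_neq0 eY0 eY1 eS eF eSb D.
have eFb : Fb = F * (1 + d * v) by rewrite eF eY1; ring.
have : F * (1 + d * v) != 0 by rewrite -eFb.
rewrite mulf_eq0 negb_or => /andP[F_neq0 den_neq0].
have : S0 * w != 0 by rewrite -eS !mulf_neq0.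
rewrite mulf_eq0 negb_or => /andP[S0_neq0 w_neq0].
have eD : D = S0 * (1 + d * v) by rewrite /D eSb eFb eY0 eY1; ring.
have eL : l * Fb * v = S0 * w * (1 + d * v) by rewrite -eS eFb; ring.
split; rewrite ?eD ?mulf_neq0 //; first by rewrite eL; field; apply/andP.
by split; rewrite ?eL ?eY0 ?eY1 ?eFb; field; rewrite ?den_neq0 ?w_neq0.
Qed.

Section SteadyState.
Variables (R : realFieldType) (n : nat) (a0 b0 c0 a1 b1 c1 Fbar Sbar : nat -> R).
Variable Ebar : R.
Hypothesis n_gt0 : (1 <= n)%N.
Hypothesis rates_gt0 : forall i, (1 <= i <= n)%N ->
  [/\ 0 < a0 i, 0 < b0 i & 0 < c0 i] /\ [/\ 0 < a1 i, 0 < b1 i & 0 < c1 i].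
Hypothesis Ebar_gt0 : 0 < Ebar.
Hypothesis totals_gt0 : forall i, (1 <= i <= n)%N -> 0 < Fbar i /\ 0 < Sbar i.
Variables S0 S1 F Y0 Y1 : nat -> R.
Hypothesis steady : steady_state n a0 b0 c0 a1 b1 c1 Fbar Sbar Ebar S0 S1 F Y0 Y1.

Local Notation x := (S1 n).
Local Notation fv := (fval n a0 b0 c0 a1 b1 c1 Fbar Sbar).
Local Notation fYv := (fYval n a0 b0 c0 a1 b1 c1 Fbar Sbar).
Local Notation dl := (delta a1 b1 c1).
Local Notation gm := (gamma c0 a1 b1 c1).
Local Notation lm := (lambda a0 b0 c0 a1 b1 c1).

Definition Ynext i := if i == n then 0 else Y0 i.+1.

Lemma Ynext_pred i : (1 <= i <= n)%N -> Ynext i.-1 = Y0 i.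
Proof.
case/andP=> i_gt0 le_in.
have lt_pred_n : (i.-1 < n)%N by rewrite (leq_trans _ le_in) // ltn_predL.
by rewrite /Ynext (ltn_eqF lt_pred_n) prednK.
Qed.

Lemma lambda_gt0 i : (1 <= i <= n)%N -> 0 < lm i.
Proof.
case/rates_gt0=> [[a0_gt0 b0_gt0 c0_gt0] [a1_gt0 b1_gt0 c1_gt0]].
have delta_gt0 : 0 < dl i by apply: divr_gt0 => //; apply: addr_gt0.
have gamma_gt0 : 0 < gm i by apply: mulr_gt0 => //; apply: divr_gt0.
by apply: mulr_gt0 => //; apply: divr_gt0 => //; apply: addr_gt0.
Qed.

Lemma steady_layer i : (1 <= i <= n)%N ->
  [/\ Y0 i = gm i * F i * S1 i, Y1 i = dl i * F i * S1 i,
      lm i * F i * S1 i = S0 i * S1 i.-1, Fbar i = F i + Y1 i &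
      Sbar i = S0 i + S1 i + Y0 i + Y1 i + Ynext i].
Proof. by case: steady => layers _ /layers. Qed.

Lemma steady_E : Ebar = S1 0 + Ynext 0.
Proof. by case: steady => _ ->; rewrite /Ynext eq_sym (gtn_eqF n_gt0). Qed.

Lemma steady_top_neq0 : x != 0.
Proof.
apply/eqP => x0.
have vanish : forall i, (i <= n)%N -> S1 i = 0 /\ Ynext i = 0.
  apply: leq_down_ind; first by rewrite /Ynext eqxx.
  move=> i i_range [S1i Ynexti]; rewrite Ynext_pred //.
  have [eY0 eY1 eS _ eSb] := steady_layer i_range.
  rewrite S1i !mulr0 in eY0 eY1 eS; rewrite S1i Ynexti eY0 eY1 !addr0 in eSb.
  have S0_neq0 : S0 i != 0 by rewrite -eSb gt_eqF //; case: (totals_gt0 i_range).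
  by split => //; apply/eqP; move/esym/eqP: eS; rewrite mulf_eq0 (negbTE S0_neq0).
have [S10 Ynext0] := vanish 0%N (leq0n n).
by move: Ebar_gt0; rewrite steady_E S10 Ynext0 addr0 ltxx.
Qed.

Lemma steady_layer_solution i : (1 <= i <= n)%N -> S1 i != 0 ->
  let D := dpoly c0 a1 b1 c1 Fbar Sbar id i (S1 i) (Ynext i) in
  [/\ 1 + dl i * S1 i != 0, D != 0, S1 i.-1 != 0,
      S1 i.-1 = lm i * Fbar i * S1 i / D &
      [/\ Y0 i = gm i * Fbar i * S1 i / (1 + dl i * S1 i),
          F i = Fbar i / (1 + dl i * S1 i),
          Y1 i = dl i * Fbar i * S1 i / (1 + dl i * S1 i) &
          S0 i = lm i * Fbar i * S1 i / ((1 + dl i * S1 i) * S1 i.-1)]].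
Proof.
move=> i_range S1_neq0; have [eY0 eY1 eS eF eSb] := steady_layer i_range.
have [Fbar_gt0 _] := totals_gt0 i_range.
exact: layer_solution (lt0r_neq0 Fbar_gt0) (lt0r_neq0 (lambda_gt0 i_range)) S1_neq0
  eY0 eY1 eS eF eSb.
Qed.

Lemma steady_cascade : forall i, (i <= n)%N ->
  [/\ S1 i = fv i x, S1 i != 0 & Ynext i = fYv i.+1 x].
Proof.
apply: leq_down_ind.
  by rewrite /fval /fYval fcas_top fYcas_top /Ynext eqxx steady_top_neq0.
move=> i i_range [S1i S1_neq0 Ynexti].
have [_ _ S1pred_neq0 eS1pred [eY0 _ _ _]] := steady_layer_solution i_range S1_neq0.
rewrite Ynext_pred // prednK; last by case/andP: i_range.
rewrite /fval /fYval in S1i Ynexti *.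
rewrite fcas_pred // [fYcas _ _ _ _ _ _ _ _ _ _ i _]fYcasE // -S1i -Ynexti.
by split.
Qed.

Lemma steady_layer_formulas i : (1 <= i <= n)%N ->
  [/\ 1 + dl i * fv i x != 0,
      dpoly c0 a1 b1 c1 Fbar Sbar id i (fv i x) (fYv i.+1 x) != 0,
      1 + dl i * S1 i != 0,
      S1 i.-1 != 0 &
      [/\ Y0 i = fYv i x,
          F i = Fbar i / (1 + dl i * S1 i),
          Y1 i = dl i * Fbar i * S1 i / (1 + dl i * S1 i) &
          S0 i = lm i * Fbar i * S1 i / ((1 + dl i * S1 i) * S1 i.-1)]].
Proof.
move=> i_range; have /andP[_ le_in] := i_range.
have [S1i S1_neq0 Ynexti] := steady_cascade le_in.
have [den_neq0 D_neq0 S1pred_neq0 _ [eY0 eF eY1 eS0]] :=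
  steady_layer_solution i_range S1_neq0.
rewrite -S1i -Ynexti /fYval fYcasE //.
by rewrite -/(fval n a0 b0 c0 a1 b1 c1 Fbar Sbar i x) -S1i.
Qed.

Lemma steady_conservation_E : fv 0 x + fYv 1 x = Ebar.
Proof. by rewrite steady_E; have [-> _ ->] := steady_cascade (leq0n n). Qed.

End SteadyState.

Theorem mainTheorem2 (R : realFieldType) (n : nat)
  (a0 b0 c0 a1 b1 c1 : nat -> R) (Ebar : R) (Fbar Sbar : nat -> R) :
  (1 <= n)%N ->
  (forall i, (1 <= i <= n)%N ->
     [/\ 0 < a0 i, 0 < b0 i & 0 < c0 i] /\ [/\ 0 < a1 i, 0 < b1 i & 0 < c1 i]) ->
  0 < Ebar ->
  (forall i, (1 <= i <= n)%N -> 0 < Fbar i /\ 0 < Sbar i) ->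
  forall r1 r2 : {poly R},
    r2 != 0 -> coprimep r1 r2 ->
    ratfun_r n a0 b0 c0 a1 b1 c1 Fbar Sbar
      = FracField.tofrac r1 / FracField.tofrac r2 ->
    let P := r2 * Ebar%:P - r1 in
    P != 0 /\
    (forall S0 S1 F Y0 Y1 : nat -> R,
       steady_state n a0 b0 c0 a1 b1 c1 Fbar Sbar Ebar S0 S1 F Y0 Y1 ->
       let x := S1 n in
       let f i := fval n a0 b0 c0 a1 b1 c1 Fbar Sbar i x in
       let fY i := fYval n a0 b0 c0 a1 b1 c1 Fbar Sbar i x in
       let dl := delta a1 b1 c1 in
       let lm := lambda a0 b0 c0 a1 b1 c1 in
       P.[x] = 0 /\
       (forall i, (i < n)%N -> S1 i = f i) /\
       (forall i, (1 <= i <= n)%N ->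
          [/\ 1 + dl i * f i != 0,
              dpoly c0 a1 b1 c1 Fbar Sbar id i (f i) (fY i.+1) != 0,
              1 + dl i * S1 i != 0,
              S1 i.-1 != 0 &
              [/\ Y0 i = fY i,
                  F i = Fbar i / (1 + dl i * S1 i),
                  Y1 i = dl i * Fbar i * S1 i / (1 + dl i * S1 i) &
                  S0 i = lm i * Fbar i * S1 i / ((1 + dl i * S1 i) * S1 i.-1)]])).
Proof.
move=> n_gt0 rates_gt0 Ebar_gt0 totals_gt0 r1 r2 r2_neq0 _ r_frac P; split.
  apply/negP => /eqP/subr0_eq r1E.
  have r2F : FracField.tofrac r2 != 0 by rewrite tofrac_eq0.
  have Sbar_gt0 i : (1 <= i <= n)%N -> 0 < Sbar i by move=> /totals_gt0[].
  have := ratfun_r_regular_at0 a0 b0 c0 a1 b1 c1 Fbar Sbar_gt0.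
  rewrite r_frac -r1E tofracM mulrAC (divff r2F) mul1r.
  by move=> /(regular_at_unique (regular_atC 0 Ebar))/eqP; rewrite gt_eqF.
move=> S0 S1 F Y0 Y1 steady x f fY dl lm.
have cascade := steady_cascade n_gt0 rates_gt0 Ebar_gt0 totals_gt0 steady.
have formulas := steady_layer_formulas n_gt0 rates_gt0 Ebar_gt0 totals_gt0 steady.
have conservation_E := steady_conservation_E n_gt0 rates_gt0 Ebar_gt0 totals_gt0 steady.
have nondeg : cascade_nondegenerate n a0 b0 c0 a1 b1 c1 Fbar Sbar x.
  by move=> i /formulas[].
split; last split; last exact: formulas.
- have := regular_at_ratfun_r nondeg; rewrite r_frac conservation_E.
  move=> /(regular_at_frac r2_neq0) r1x.
  by rewrite /P hornerD hornerN hornerM hornerC r1x mulrC subrr.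
- by move=> i /ltnW/cascade[].
Qed.
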